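(* For $x\in X(l_1,\dots,l_n,l_\infty)$ let $g(x)$ be the greatest common divisor of the numbers $m_{a,b}(x)$ of arcs joining the pairs $\{a,b\}$ of marked points of $x$. Then $g(hx)=g(x)$ for every $h\in J_n$.
   Context: Cactus group: $J_n$ is the group generated by $s_{p,q}$, $1\le p<q\le n$, subject to the relations $s_{p,q}^2=e$; $s_{p,q}s_{p',q'}=s_{p',q'}s_{p,q}$ if $[p,q]$ and $[p',q']$ are disjoint; $s_{p,q}s_{p',q'}s_{p,q}=s_{p+q-q',p+q-p'}$ if $p\le p'<q'\le q$. Arc diagrams: fix nonnegative integers $l_1,\dots,l_n,l_\infty$. On the boundary circle of a closed disc place $n+1$ marked positions: position $0$ (occupied by $z_\infty$) and positions $1,\dots,n$ following it clockwise. An arc diagram is a bijective assignment of labels $z_1,\dots,z_n$ to positions $1,\dots,n$ together with a finite collection of simple arcs in the disc, pairwise disjoint except at endpoints, each joining two distinct marked points, such that $z_j$ is an endpoint of exactly $l_j$ arcs ($j\in\{1,\dots,n,\infty\}$; $l_j$ is the valence). Parallel arcs are allowed; diagrams are up to isotopy, equivalently determined by the labelling and the number of arcs between each pair of marked points. $X(l_1,\dots,l_n,l_\infty)$ is the set of such diagrams. Action: $s_{p,q}$ ($1\le p<q\le n$) acts by cutting off positions $p,\dots,q$ with a chord $\ell$ (arcs isotoped to cross $\ell$ at most once), reflecting that region by the reflection reversing $\ell$ (label at position $p+t$ goes to position $q-t$, crossing points on $\ell$ reversed), leaving the rest unchanged and reconnecting arcs at $\ell$. Words act right to left; this is an action of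 $J_n$. *)

From mathcomp Require Import all_boot.
Set Implicit Arguments. Unset Strict Implicit. Unset Printing Implicit Defensive.

(* Marked positions on the boundary circle are 0,1,...,n in clockwise order;
   position 0 carries z_oo.  Labels: 0 stands for z_oo, j (1<=j<=n) for z_j.
   A diagram (up to isotopy) is its labelling [lab : position -> label] and
   the number [arcs a b] of arcs joining positions a and b. *)
Record diagram := Diagram { lab : nat -> nat; arcs : nat -> nat -> nat }.

(* Valences: [l 0] = l_oo and [l j] = l_j for 1 <= j <= n. *)
Definition is_arc_diagram (n : nat) (l : nat -> nat) (x : diagram) : Prop :=
  [/\ lab x 0 = 0,
      {in [pred i | 1 <= i <= n], forall i, 1 <= lab x i <= n}
    & {in [pred i | 1 <= i <= n] &, injective (lab x)}] /\
  [/\ (forall a b, arcs x a b = arcs x b a),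
      (forall a, arcs x a a = 0),
      (forall a b, n < a -> arcs x a b = 0),
      (* simple, pairwise disjoint arcs: no two arcs cross *)
      (forall a c b d, a < c -> c < b -> b < d -> arcs x a b = 0 \/ arcs x c d = 0)
    & (* z_j is an endpoint of exactly l_j arcs *)
      (forall i, i <= n -> \sum_(j < n.+1) arcs x i j = l (lab x i))].

Definition inside (p q i : nat) : bool := p <= i <= q.
Definition refl (p q i : nat) : nat := if inside p q i then p + q - i else i.

(* outer positions in the order met along the chord l, from its end near p
   to its end near q:  p-1, ..., 0, n, ..., q+1 *)
Definition outer_order (n p q : nat) : seq nat :=
  rev (iota 0 p) ++ rev (iota q.+1 (n - q)).
(* inner positions in the order met along l (same direction): p, ..., q *)
Definition inner_order (p q : nat) : seq nat := iota p (q - p).+1.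

(* outer endpoints of the arcs crossing l, in order along l *)
Definition cross_out (n p q : nat) (m : nat -> nat -> nat) : seq nat :=
  flatten [seq nseq (\sum_(a <- inner_order p q) m a o) o | o <- outer_order n p q].
(* inner endpoints of the crossing arcs after reflecting the region, in order
   along l (the reflection reverses l and maps endpoint a to p+q-a) *)
Definition cross_in_refl (n p q : nat) (m : nat -> nat -> nat) : seq nat :=
  flatten [seq nseq (\sum_(o <- outer_order n p q) m (refl p q a) o) a
          | a <- inner_order p q].

(* arcs after cutting, reflecting and reconnecting at l *)
Definition act_arcs (n p q : nat) (m : nat -> nat -> nat) (a b : nat) : nat :=
  let cr := zip (cross_in_refl n p q m) (cross_out n p q m) in
  if inside p q a && inside p q b then m (refl p q a) (refl p q b)
  else if ~~ inside p q a && ~~ inside p q b then m a b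
  else if inside p q a then count (pred1 (a, b)) cr
  else count (pred1 (b, a)) cr.

Definition act_s (n : nat) (pq : nat * nat) (x : diagram) : diagram :=
  Diagram (fun i => lab x (refl pq.1 pq.2 i)) (act_arcs n pq.1 pq.2 (arcs x)).

(* a word s_{p1,q1} ... s_{pk,qk} in the generators acts right to left *)
Definition act_word (n : nat) (w : seq (nat * nat)) (x : diagram) : diagram :=
  foldr (act_s n) x w.

Definition valid_gen (n : nat) (pq : nat * nat) : bool :=
  (1 <= pq.1) && (pq.1 < pq.2) && (pq.2 <= n).

Definition arc_gcd (n : nat) (x : diagram) : nat :=
  \big[gcdn/0]_(a < n.+1) \big[gcdn/0]_(b < n.+1 | a < b) arcs x a b.

From mathcomp Require Import all_boot zify.
Set Implicit Arguments. Unset Strict Implicit.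

(* Read along the chord cutting off positions p..q, the arcs of s_{p,q} x that cross
   it are obtained by zipping two sequences: the inner endpoints, each repeated as
   many times as arcs of x join it to the outside, and the outer endpoints, each
   repeated as many times as arcs of x join it to the inside.  Every repetition count
   is a sum of arc numbers of x, hence a multiple of g(x), so both sequences are
   g(x)-fold stutters and every arc number of s_{p,q} x is a multiple of g(x).
   Conversely, since the arcs of x do not cross, listing them by inner endpoint puts
   their outer endpoints in the order met along the chord; hence the same zipping
   recovers x from s_{p,q} x, i.e. s_{p,q} is an involution, and g(s_{p,q} x) divides
   g(x).  As symmetry and non-crossing are preserved, induction on the word ends the
   proof. *)

(** * Block sequences *)

Lemma pairwise_flatten (T : eqType) (r : rel T) (ss : seq (seq T)) :
  all (pairwise r) ss -> pairwise (allrel r) ss -> pairwise r (flatten ss).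
Proof.
elim: ss => //= s ss IH /andP[rs rss] /andP[r_s_ss r_ss].
rewrite pairwise_cat rs IH // !andbT; apply/allrelP => x y xs /flattenP[t ts yt].
exact: (allrelP (allP r_s_ss t ts)).
Qed.

Lemma pairwise_nseq (T : Type) (r : rel T) k x : r x x -> pairwise r (nseq k x).
Proof. by move=> rxx; elim: k => //= k ->; rewrite all_nseq rxx orbT. Qed.

Lemma pairwise_index (T : eqType) (s : seq T) :
  uniq s -> pairwise (fun x y => index x s <= index y s) s.
Proof.
case: s => // x0 s' s_uniq; apply/(pairwiseP x0) => i j i_lt j_lt ij.
by rewrite !index_uniq // ltnW.
Qed.

Definition blocks (T : Type) (f : T -> nat) (s : seq T) :=
  flatten [seq nseq (f x) x | x <- s].

Definition stutter (T : Type) (g : nat) (s : seq T) := blocks (fun=> g) s.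

Lemma blocks_cat (T : Type) (f : T -> nat) s1 s2 :
  blocks f (s1 ++ s2) = blocks f s1 ++ blocks f s2.
Proof. by rewrite /blocks map_cat flatten_cat. Qed.

Lemma size_blocks (T : Type) (f : T -> nat) (s : seq T) :
  size (blocks f s) = \sum_(x <- s) f x.
Proof. by rewrite size_flatten sumnE !big_map; apply: eq_bigr => x _; rewrite size_nseq. Qed.

Lemma stutter_nseq (T : Type) g k (x : T) : stutter g (nseq k x) = nseq (k * g) x.
Proof. by elim: k => //= k IH; rewrite /stutter /blocks /= in IH *; rewrite IH mulSn nseqD. Qed.

Lemma count_stutter (T : Type) (P : pred T) g (s : seq T) : count P (stutter g s) = g * count P s.
Proof.
elim: s => [|x s IH] /=; first by rewrite muln0.
by rewrite /stutter /blocks /= count_cat -/(blocks _ s) IH count_nseq mulnDr mulnC.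
Qed.

Lemma zip_stutter (S T : Type) g (s : seq S) (t : seq T) :
  zip (stutter g s) (stutter g t) = stutter g (zip s t).
Proof.
rewrite /stutter /blocks; elim: s t => [|x s IH] [|y t] /=.
- by [].
- by case: (nseq g y ++ _).
- by case: (nseq g x ++ _).
by rewrite zip_cat ?size_nseq // IH; congr (_ ++ _); elim: {IH}g => //= g ->.
Qed.

Lemma blocks_stutter (T : Type) g (f : T -> nat) (s : seq T) :
  all (fun x => g %| f x) s -> blocks f s = stutter g (blocks (fun x => f x %/ g) s).
Proof.
elim: s => //= x s IH /andP[g_fx g_fs]; rewrite /blocks /= -!/(blocks _ s) IH //.
by rewrite -[in LHS](divnK g_fx) /stutter blocks_cat -stutter_nseq.
Qed.

Section Blocks.
Variable T : eqType.
Implicit Types (s : seq T) (f : T -> nat).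

Lemma eq_in_blocks f f' s : {in s, f =1 f'} -> blocks f s = blocks f' s.
Proof. by move=> eq_f; rewrite /blocks; congr flatten; apply/eq_in_map => x /eq_f ->. Qed.

Lemma mem_blocks f s x : (x \in blocks f s) = (x \in s) && (0 < f x).
Proof.
apply/flatten_mapP/andP => [[y ys]|[xs fx]]; last by exists x; rewrite // mem_nseq fx /=.
by rewrite mem_nseq => /andP[fy /eqP ->].
Qed.

Lemma blocks_subset f s : {subset blocks f s <= s}.
Proof. by move=> x; rewrite mem_blocks => /andP[]. Qed.

Lemma count_blocks (P : pred T) f s : count P (blocks f s) = \sum_(x <- s) P x * f x.
Proof. by rewrite count_flatten sumnE !big_map; apply: eq_bigr => x _; rewrite count_nseq. Qed.

Lemma count_mem_blocks f s x : uniq s -> x \in s -> count_mem x (blocks f s) = f x.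
Proof.
move=> s_uniq xs; rewrite count_blocks (bigD1_seq x) //= eqxx mul1n big1 ?addn0 //.
by move=> y /negbTE /= ->.
Qed.

Lemma pairwise_blocks f s :
  uniq s -> pairwise (fun x y => index x s <= index y s) (blocks f s).
Proof.
move=> s_uniq; apply: pairwise_flatten.
  by apply/allP => _ /mapP[x _ ->]; apply: pairwise_nseq.
rewrite pairwise_map; apply: sub_pairwise (pairwise_index s_uniq) => x y xy.
by apply/allrelP => u v; rewrite !mem_nseq => /andP[_ /eqP->] /andP[_ /eqP->].
Qed.

Lemma eq_blocks_sorted f s t :
    uniq s -> all (mem s) t -> sorted (fun x y => index x s <= index y s) t ->
    {in s, forall x, count_mem x t = f x} ->
  t = blocks f s.
Proof.
move=> s_uniq ts t_sorted t_count.
apply: (sorted_eq_in (leT := fun x y => index x s <= index y s)) => //.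
- by move=> y x z _ _ _; apply: leq_trans.
- by move=> x y /(allP ts) xs /(allP ts) ys /anti_leq; apply: index_inj.
- rewrite sorted_pairwise; last by move=> y x z; apply: leq_trans.
  exact: pairwise_blocks.
apply/allP => x _ /=; case xs: (x \in s); first by rewrite t_count // count_mem_blocks.
have xNb : x \notin blocks f s by apply: contraFN xs; apply: blocks_subset.
have xNt : x \notin t by apply: contraFN xs; apply: (allP ts).
by rewrite (count_memPn xNb) (count_memPn xNt).
Qed.

End Blocks.

Lemma dvdn_count_zip_blocks (S T : Type) g (f : S -> nat) (f' : T -> nat) s t P :
    all (fun x => g %| f x) s -> all (fun y => g %| f' y) t ->
  g %| count P (zip (blocks f s) (blocks f' t)).
Proof.
by move=> /blocks_stutter-> /blocks_stutter->; rewrite zip_stutter count_stutter dvdn_mulr.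
Qed.

Lemma zip_pairwise_mono (S T : eqType) (r : rel S) (r' : rel T) s t x y x' y' :
    reflexive r' -> pairwise r s -> pairwise r' t ->
    (x, y) \in zip s t -> (x', y') \in zip s t -> ~~ r x' x ->
  r' y y'.
Proof.
move=> r'_refl r_s r'_t /(nthP (x, y))[k k_lt] + /(nthP (x, y))[k' k'_lt].
rewrite !nth_zip_cond k_lt k'_lt => -[xk yk] [xk' yk']; rewrite -xk -xk' -yk -yk'.
move: k_lt k'_lt; rewrite size_zip !leq_min => /andP[ks kt] /andP[k's k't].
case: (ltngtP k k') => [kk' | k'k | <-] // xNx'.
- exact: (pairwiseP y r'_t).
- by rewrite (pairwiseP x r_s) in xNx'.
Qed.

Lemma sum_nat_gt0P (T : eqType) (F : T -> nat) (s : seq T) :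
  reflect (exists2 x, x \in s & 0 < F x) (0 < \sum_(x <- s) F x).
Proof.
rewrite lt0n sum_nat_seq_neq0.
by apply: (iffP hasP) => -[x xs Fx]; exists x; rewrite // lt0n in Fx *.
Qed.

Lemma sum_count_fiber (T : Type) (U : eqType) (r : seq U) (h : T -> U) (P : pred T) z :
    uniq r -> all (fun x => h x \in r) z ->
  \sum_(y <- r) count (fun x => P x && (h x == y)) z = count P z.
Proof.
move=> r_uniq; elim: z => [|x z IH] /=; first by rewrite big1.
case/andP=> hx hz; rewrite big_split /= IH //; congr (_ + _).
case: (P x) => /=; last by rewrite big1.
by rewrite (bigD1_seq (h x)) //= eqxx big1 // => y; rewrite eq_sym => /negbTE->.
Qed.

(** * The action of s_{p,q} on arc numbers *)

Definition noncrossing (m : nat -> nat -> nat) :=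
  forall a c b d, a < c -> c < b -> b < d -> m a b = 0 \/ m c d = 0.

Section Reflection.
Variables (n p q : nat).

Local Notation inside := (inside p q).
Local Notation rf := (refl p q).
Local Notation io := (inner_order p q).
Local Notation oo := (outer_order n p q).

Lemma insideE i : inside i = (p <= i) && (i <= q).
Proof. by []. Qed.

Lemma refl_inside i : inside i -> rf i = p + q - i.
Proof. by rewrite /refl => ->. Qed.

Lemma refl_outside i : ~~ inside i -> rf i = i.
Proof. by rewrite /refl => /negbTE->. Qed.

Lemma inside_refl i : inside i -> inside (rf i).
Proof. by move=> i_in; rewrite refl_inside //; move: i_in; rewrite !insideE; lia. Qed.

Lemma reflK : involutive rf.
Proof.
move=> i; case i_in: (inside i); last by rewrite !refl_outside ?i_in.
by rewrite refl_inside ?inside_refl // refl_inside //; move: i_in; rewrite insideE; lia.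
Qed.

Lemma index_inner_order x : inside x -> index x io = x - p.
Proof.
rewrite insideE => x_in; have x_nth : nth 0 io (x - p) = x by rewrite nth_iota; lia.
by rewrite -{1}x_nth index_uniq ?iota_uniq ?size_iota //; lia.
Qed.

Hypothesis le_pq : p <= q.

Lemma mem_inner_order x : (x \in io) = inside x.
Proof. by rewrite mem_iota insideE; apply/idP/idP; lia. Qed.

Lemma sum_inner_order_refl (F : nat -> nat) : \sum_(a <- io) F (rf a) = \sum_(a <- io) F a.
Proof.
rewrite -(big_map rf xpredT F); apply/perm_big/uniq_perm; rewrite ?iota_uniq //.
  by rewrite map_inj_uniq ?iota_uniq //; apply: can_inj reflK.
move=> x; rewrite mem_inner_order; apply/mapP/idP => [[y] | x_in].
  by rewrite mem_inner_order => /inside_refl y_in ->.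
by exists (rf x); rewrite ?reflK // mem_inner_order inside_refl.
Qed.

Hypothesis le_qn : q <= n.

Lemma mem_outer_order x : (x \in oo) = (x <= n) && ~~ inside x.
Proof. by rewrite mem_cat !mem_rev !mem_iota insideE; apply/idP/idP; lia. Qed.

Lemma uniq_outer_order : uniq oo.
Proof.
rewrite cat_uniq !rev_uniq !iota_uniq /= andbT; apply/hasPn => x.
by rewrite !mem_rev !mem_iota; apply/contraTN; lia.
Qed.

Lemma index_outer_order_lt o : o < p -> index o oo = p.-1 - o.
Proof.
move=> o_lt; have o_nth : nth 0 oo (p.-1 - o) = o.
  by rewrite nth_cat size_rev size_iota ifT ?nth_rev ?size_iota ?nth_iota; lia.
by rewrite -{1}o_nth index_uniq ?uniq_outer_order // size_cat !size_rev !size_iota; lia.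
Qed.

Lemma index_outer_order_gt o : q < o <= n -> index o oo = p + (n - o).
Proof.
move=> o_gt; have o_nth : nth 0 oo (p + (n - o)) = o.
  by rewrite nth_cat size_rev size_iota ifF ?nth_rev ?size_iota ?nth_iota; lia.
by rewrite -{1}o_nth index_uniq ?uniq_outer_order // size_cat !size_rev !size_iota; lia.
Qed.

Variable m : nat -> nat -> nat.
Hypothesis m_sym : forall a b, m a b = m b a.

Local Notation N := (act_arcs n p q m).

Local Notation out_deg f a := (\sum_(o <- oo) f a o).
Local Notation in_deg f o := (\sum_(a <- io) f a o).
Local Notation cross := (zip (cross_in_refl n p q m) (cross_out n p q m)).

Lemma cross_in_reflE : cross_in_refl n p q m = blocks (fun a => out_deg m (rf a)) io.
Proof. by []. Qed.

Lemma cross_outE : cross_out n p q m = blocks (fun o => in_deg m o) oo.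
Proof. by []. Qed.

Lemma act_arcs_inside a b : inside a -> inside b -> N a b = m (rf a) (rf b).
Proof. by rewrite /act_arcs => -> ->. Qed.

Lemma act_arcs_outside a b : ~~ inside a -> ~~ inside b -> N a b = m a b.
Proof. by rewrite /act_arcs => /negbTE-> /negbTE->. Qed.

Lemma act_arcs_mixed a o : inside a -> ~~ inside o -> N a o = count_mem (a, o) cross.
Proof. by rewrite /act_arcs => -> /negbTE->. Qed.

Lemma act_arcs_sym a b : N a b = N b a.
Proof.
by rewrite /act_arcs; case: (inside a); case: (inside b); rewrite //= m_sym.
Qed.

Lemma size_cross_in_refl : size (cross_in_refl n p q m) = size (cross_out n p q m).
Proof.
rewrite cross_in_reflE cross_outE !size_blocks.
by rewrite (sum_inner_order_refl (fun a => out_deg m a)) exchange_big.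
Qed.

Lemma mem_cross i o :
  (i, o) \in cross -> (i \in cross_in_refl n p q m) && (o \in cross_out n p q m).
Proof.
move=> io_cross; have i_in : i \in unzip1 cross := map_f fst io_cross.
have o_in : o \in unzip2 cross := map_f snd io_cross.
by rewrite unzip1_zip ?unzip2_zip ?size_cross_in_refl // in i_in o_in; rewrite i_in o_in.
Qed.

Lemma sum_act_arcs_outer a : inside a -> out_deg N a = out_deg m (rf a).
Proof.
move=> a_in; transitivity (\sum_(o <- oo) count (fun x => (x.1 == a) && (x.2 == o)) cross).
  apply: eq_big_seq => o; rewrite mem_outer_order => /andP[_ o_out].
  by rewrite act_arcs_mixed //; apply: eq_count => -[].
rewrite sum_count_fiber ?uniq_outer_order //; last first.
  by apply/allP => -[i o] /mem_cross /andP[_ /blocks_subset].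
rewrite (@eq_count _ _ (preim fst (pred1 a))) // -count_map -/(unzip1 cross).
rewrite unzip1_zip ?size_cross_in_refl //.
by rewrite cross_in_reflE count_mem_blocks ?iota_uniq ?mem_inner_order.
Qed.

Lemma sum_act_arcs_inner o : o \in oo -> in_deg N o = in_deg m o.
Proof.
move=> o_oo; transitivity (\sum_(a <- io) count (fun x => (x.2 == o) && (x.1 == a)) cross).
  apply: eq_big_seq => a; rewrite mem_inner_order => a_in.
  move: o_oo; rewrite mem_outer_order => /andP[_ o_out].
  by rewrite act_arcs_mixed //; apply: eq_count => -[i o'] /=; rewrite andbC.
rewrite sum_count_fiber ?iota_uniq //; last first.
  by apply/allP => -[i o'] /mem_cross /andP[/blocks_subset].
rewrite (@eq_count _ _ (preim snd (pred1 o))) // -count_map -/(unzip2 cross).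
rewrite unzip2_zip ?size_cross_in_refl //.
by rewrite cross_outE count_mem_blocks ?uniq_outer_order.
Qed.

Lemma act_arcs_mixed_witness i o : inside i -> ~~ inside o -> 0 < N i o ->
  [/\ o <= n, exists2 o', o' \in oo & 0 < m (rf i) o' & exists2 i', inside i' & 0 < m i' o].
Proof.
move=> i_in o_out; rewrite act_arcs_mixed // -has_count => /hasP[[j u] + /eqP[<- <-]].
move=> /mem_cross; rewrite cross_in_reflE cross_outE !mem_blocks mem_outer_order.
case/andP=> /andP[_ /sum_nat_gt0P[o' o'_oo mo']] /andP[/andP[o_le _] /sum_nat_gt0P[i' i'_io mi']].
by split=> //; [exists o' | exists i'; rewrite -?mem_inner_order].
Qed.

Lemma act_arcs_mixed_mono i o i' o' :
    inside i -> ~~ inside o -> inside i' -> ~~ inside o' -> i < i' ->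
    0 < N i o -> 0 < N i' o' ->
  index o oo <= index o' oo.
Proof.
move=> i_in o_out i'_in o'_out lt_ii'.
rewrite !act_arcs_mixed // -!has_count.
move=> /hasP[[j u] cross_io /eqP[ji uo]] /hasP[[j' u'] cross_io' /eqP[j'i' u'o']].
subst j u j' u'.
apply: (zip_pairwise_mono (r := fun x y => index x io <= index y io)
  (r' := fun x y => index x oo <= index y oo) _ _ _ cross_io cross_io') => //.
- by apply: pairwise_blocks; rewrite iota_uniq.
- by apply: pairwise_blocks; rewrite uniq_outer_order.
by rewrite -ltnNge !index_inner_order //; move: i_in i'_in; rewrite !insideE; lia.
Qed.

Hypothesis m_noncrossing : noncrossing m.

Lemma arcs_cross_absurd a c b d : a < c -> c < b -> b < d -> 0 < m a b -> 0 < m c d -> False.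
Proof. by move=> ac cb bd; case: (m_noncrossing ac cb bd) => ->. Qed.

Lemma noncrossing_index_mono i o i' o' :
    inside i -> inside i' -> i < i' -> o \in oo -> o' \in oo ->
    0 < m i o -> 0 < m i' o' ->
  index o oo <= index o' oo.
Proof.
rewrite !insideE !mem_outer_order !insideE => i_in i'_in lt_ii' o_out o'_out mio mio'.
rewrite leqNgt; apply/negP.
have [o_lt | o_gt] : o < p \/ q < o <= n by lia.
all: have [o'_lt | o'_gt] : o' < p \/ q < o' <= n by lia.
- rewrite (index_outer_order_lt o_lt) (index_outer_order_lt o'_lt) => lt_idx.
  rewrite m_sym in mio; rewrite m_sym in mio'.
  by apply: (@arcs_cross_absurd o o' i i'); lia.
- by rewrite (index_outer_order_lt o_lt) (index_outer_order_gt o'_gt); lia.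
- rewrite (index_outer_order_gt o_gt) (index_outer_order_lt o'_lt) => _.
  rewrite m_sym in mio'.
  by apply: (@arcs_cross_absurd o' i i' o); lia.
- rewrite (index_outer_order_gt o_gt) (index_outer_order_gt o'_gt) => lt_idx.
  by apply: (@arcs_cross_absurd i i' o o'); lia.
Qed.

Lemma act_arcs_noncrossing_inside a c b d : inside a -> a < c -> c < b -> b < d ->
  0 < N a b -> 0 < N c d -> False.
Proof.
move=> ia ac cb bd; case ib: (inside b); case ic: (inside c); case id: (inside d);
  move: (ia) (ib) (ic) (id); rewrite !insideE => ia' ib' ic' id'; try lia.
(* remaining cases, by insideness of (b, c, d): TTT, TTF, FTF, FFF *)
- rewrite !act_arcs_inside // m_sym => Nab; rewrite m_sym => Ncd.
  by apply: (arcs_cross_absurd _ _ _ Ncd Nab); rewrite !refl_inside //; lia.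
- rewrite act_arcs_inside // m_sym => Nab.
  move=> /(act_arcs_mixed_witness ic (negbT id))[_ [o' o'_oo mco] _].
  move: o'_oo; rewrite mem_outer_order insideE => o'_out.
  have [o'_lt | o'_gt] : o' < p \/ q < o' by lia.
  + rewrite m_sym in mco; apply: (arcs_cross_absurd _ _ _ mco Nab); rewrite !refl_inside //; lia.
  + by apply: (arcs_cross_absurd _ _ _ Nab mco); rewrite !refl_inside //; lia.
- move=> Nab Ncd.
  have [b_le _ _] := act_arcs_mixed_witness ia (negbT ib) Nab.
  have [d_le _ _] := act_arcs_mixed_witness ic (negbT id) Ncd.
  have := act_arcs_mixed_mono ia (negbT ib) ic (negbT id) ac Nab Ncd.
  by rewrite !index_outer_order_gt //; lia.
- move=> /(act_arcs_mixed_witness ia (negbT ib))[_ _ [i' i'_in mib]].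
  rewrite act_arcs_outside ?ic ?id // => Ncd; move: i'_in; rewrite insideE => i'_in.
  by apply: (arcs_cross_absurd _ _ _ mib Ncd); lia.
Qed.

Lemma act_arcs_noncrossing_outside a c b d : ~~ inside a -> a < c -> c < b -> b < d ->
  0 < N a b -> 0 < N c d -> False.
Proof.
move=> /negbTE ia ac cb bd; case ib: (inside b); case ic: (inside c); case id: (inside d);
  move: (ia) (ib) (ic) (id); rewrite !insideE => ia' ib' ic' id'; try lia.
(* remaining cases, by insideness of (b, c, d): TTT, TTF, TFT, TFF, FTF, FFT, FFF *)
- rewrite act_arcs_sym => /(act_arcs_mixed_witness ib (negbT ia))[_ [o' o'_oo mbo] _].
  rewrite act_arcs_inside // m_sym => Ncd.
  move: o'_oo; rewrite mem_outer_order insideE => o'_out.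
  have [o'_lt | o'_gt] : o' < p \/ q < o' by lia.
  + rewrite m_sym in mbo.
    by apply: (arcs_cross_absurd _ _ _ mbo Ncd); rewrite !refl_inside //; lia.
  + by apply: (arcs_cross_absurd _ _ _ Ncd mbo); rewrite !refl_inside //; lia.
- rewrite act_arcs_sym => Nba Ncd.
  have [a_le _ _] := act_arcs_mixed_witness ib (negbT ia) Nba.
  have [d_le _ _] := act_arcs_mixed_witness ic (negbT id) Ncd.
  have := act_arcs_mixed_mono ic (negbT id) ib (negbT ia) cb Ncd Nba.
  by rewrite index_outer_order_gt ?index_outer_order_lt //; lia.
- rewrite act_arcs_sym => Nba; rewrite act_arcs_sym => Ndc.
  have := act_arcs_mixed_mono ib (negbT ia) id (negbT ic) bd Nba Ndc.
  by rewrite !index_outer_order_lt //; lia.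
- rewrite act_arcs_sym => /(act_arcs_mixed_witness ib (negbT ia))[_ _ [i' i'_in mia]].
  rewrite act_arcs_outside ?ic ?id // => Ncd; move: i'_in; rewrite insideE => i'_in.
  by rewrite m_sym in mia; apply: (arcs_cross_absurd _ _ _ mia Ncd); lia.
- rewrite act_arcs_outside ?ia ?ib // => Nab.
  move=> /(act_arcs_mixed_witness ic (negbT id))[_ _ [i' i'_in mid]].
  by move: i'_in; rewrite insideE => i'_in; apply: (arcs_cross_absurd _ _ _ Nab mid); lia.
- rewrite act_arcs_outside ?ia ?ib // => Nab.
  rewrite act_arcs_sym => /(act_arcs_mixed_witness id (negbT ic))[_ _ [i' i'_in mic]].
  move: i'_in; rewrite insideE => i'_in; rewrite m_sym in mic.
  by apply: (arcs_cross_absurd _ _ _ Nab mic); lia.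
- rewrite !act_arcs_outside ?ia ?ib ?ic ?id // => Nab Ncd.
  by apply: (arcs_cross_absurd _ _ _ Nab Ncd).
Qed.

Lemma noncrossing_act_arcs : noncrossing N.
Proof.
move=> a c b d ac cb bd.
have [->|Nab] := posnP (N a b); first by left.
have [->|Ncd] := posnP (N c d); first by right.
exfalso; case: (boolP (inside a)) => ia.
- exact: (act_arcs_noncrossing_inside ia ac cb bd Nab Ncd).
- exact: (act_arcs_noncrossing_outside ia ac cb bd Nab Ncd).
Qed.

(* Non-crossing forces the outer endpoints of this list to be sorted along the chord. *)
Let crossing_arcs := flatten [seq [seq (a, o) | o <- blocks (m a) oo] | a <- io].

Lemma unzip1_crossing_arcs : unzip1 crossing_arcs = blocks (fun a => out_deg m a) io.
Proof.
rewrite /unzip1 map_flatten -map_comp; congr flatten; apply: eq_map => a /=.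
by rewrite -map_comp -size_blocks; elim: (blocks _ _) => //= o s ->.
Qed.

Lemma unzip2_crossing_arcs : unzip2 crossing_arcs = flatten [seq blocks (m a) oo | a <- io].
Proof.
rewrite /unzip2 map_flatten -map_comp; congr flatten; apply: eq_map => a /=.
by rewrite -map_comp map_id.
Qed.

Lemma count_crossing_arcs a o : inside a -> o \in oo -> count_mem (a, o) crossing_arcs = m a o.
Proof.
rewrite -mem_inner_order => a_io o_oo.
rewrite count_flatten sumnE !big_map (bigD1_seq a) ?iota_uniq //= big1 => [|a' a'a].
  rewrite addn0 count_map (@eq_count _ _ (pred1 o)) => [|o'].
    by rewrite count_mem_blocks ?uniq_outer_order.
  by rewrite /= xpair_eqE eqxx.
rewrite count_map (@eq_count _ _ pred0) ?count_pred0 // => o'.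
by rewrite /= xpair_eqE (negbTE a'a).
Qed.

Lemma pairwise_unzip2_crossing_arcs :
  pairwise (fun x y => index x oo <= index y oo) (unzip2 crossing_arcs).
Proof.
rewrite unzip2_crossing_arcs; apply: pairwise_flatten.
  by apply/allP => _ /mapP[a _ ->]; apply: pairwise_blocks; rewrite uniq_outer_order.
rewrite pairwise_map; apply: (@sub_in_pairwise _ (mem io) ltn) (allss io) _ => [a a'|].
  rewrite !mem_inner_order => a_in a'_in lt_aa'.
  apply/allrelP => o o'; rewrite !mem_blocks => /andP[o_oo mao] /andP[o'_oo mao'].
  exact: noncrossing_index_mono lt_aa' o_oo o'_oo mao mao'.
by rewrite -sorted_pairwise ?iota_ltn_sorted // => y x z; apply: ltn_trans.
Qed.

Lemma unzip2_crossing_arcsE : unzip2 crossing_arcs = blocks (fun o => in_deg m o) oo.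
Proof.
apply: eq_blocks_sorted; rewrite ?uniq_outer_order //.
- rewrite unzip2_crossing_arcs; apply/allP => o /flatten_mapP[a _].
  exact: blocks_subset.
- by rewrite sorted_pairwise ?pairwise_unzip2_crossing_arcs // => y x z; apply: leq_trans.
move=> o o_oo; rewrite unzip2_crossing_arcs count_flatten sumnE !big_map.
by apply: eq_bigr => a _; rewrite count_mem_blocks ?uniq_outer_order.
Qed.

Lemma count_zip_blocks_deg a o : inside a -> o \in oo ->
  count_mem (a, o) (zip (blocks (fun a => out_deg m a) io) (blocks (fun o => in_deg m o) oo)) =
  m a o.
Proof.
by rewrite -unzip1_crossing_arcs -unzip2_crossing_arcsE zip_unzip; apply: count_crossing_arcs.
Qed.

End Reflection.

(** * Invariance of the gcd *)

(* [arc_gcd n x] is [pair_gcd n (arcs x)] by conversion. *)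
Definition pair_gcd (n : nat) (m : nat -> nat -> nat) :=
  \big[gcdn/0]_(a < n.+1) \big[gcdn/0]_(b < n.+1 | a < b) m a b.

Lemma pair_gcd_dvdn n m a b : (forall a b, m a b = m b a) ->
  a != b -> a <= n -> b <= n -> pair_gcd n m %| m a b.
Proof.
move=> m_sym; wlog lt_ab : a b / a < b => [wlog_ab ne_ab a_le b_le|_ a_le b_le].
  case: (ltngtP a b) => [lt_ab | lt_ba | eq_ab]; first exact: wlog_ab.
    by rewrite m_sym; apply: wlog_ab; rewrite // eq_sym.
  by rewrite eq_ab eqxx in ne_ab.
have a_lt : a < n.+1 by [].
have b_lt : b < n.+1 by [].
apply: (biggcdn_inf (Ordinal a_lt)) => //.
exact: (biggcdn_inf (Ordinal b_lt)).
Qed.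

Lemma dvdn_pair_gcd n m g : (forall a b, a < b -> b <= n -> g %| m a b) -> g %| pair_gcd n m.
Proof.
move=> g_dvd; apply/dvdn_biggcdP => a _; apply/dvdn_biggcdP => b lt_ab.
by apply: g_dvd; rewrite -1?ltnS.
Qed.

Section GcdInvariance.
Variables (n p q : nat) (m : nat -> nat -> nat).
Hypotheses (le_pq : p <= q) (le_qn : q <= n).
Hypothesis m_sym : forall a b, m a b = m b a.

Local Notation inside := (inside p q).
Local Notation N := (act_arcs n p q m).
Local Notation out_deg a := (\sum_(o <- outer_order n p q) m a o).
Local Notation in_deg o := (\sum_(a <- inner_order p q) m a o).

Lemma pair_gcd_dvdn_act_arcs : pair_gcd n m %| pair_gcd n N.
Proof.
set g := pair_gcd n m.
have g_dvd x y : x != y -> x <= n -> y <= n -> g %| m x y by apply: pair_gcd_dvdn.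
have g_in_out x o : inside x -> o \in outer_order n p q -> g %| m x o.
  rewrite mem_outer_order // insideE => x_in /andP[o_le o_out].
  by apply: g_dvd => //; [apply: contraNneq o_out => <-; rewrite insideE | lia].
have g_cross P : g %| count P (zip (cross_in_refl n p q m) (cross_out n p q m)).
  rewrite cross_in_reflE cross_outE; apply: dvdn_count_zip_blocks; apply/allP.
    move=> a; rewrite mem_inner_order // => /inside_refl a_in; rewrite big_seq.
    by apply: dvdn_sum => o; apply: g_in_out.
  move=> o o_oo; rewrite big_seq; apply: dvdn_sum => a.
  by rewrite mem_inner_order // => a_in; apply: g_in_out.
apply: dvdn_pair_gcd => a b lt_ab b_le.
have a_le : a <= n by apply: ltnW (leq_trans lt_ab _).
case: (boolP (inside a)) => a_in; case: (boolP (inside b)) => b_in.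
- move: (inside_refl a_in) (inside_refl b_in); rewrite act_arcs_inside // !insideE => ra_in rb_in.
  by apply: g_dvd; [rewrite (can_eq (reflK p q)) neq_ltn lt_ab | lia | lia].
- by rewrite act_arcs_mixed.
- by rewrite act_arcs_sym // act_arcs_mixed.
- by rewrite act_arcs_outside //; apply: g_dvd; rewrite // neq_ltn lt_ab.
Qed.

Hypothesis m_noncrossing : noncrossing m.

Lemma act_arcsK a b : a <= n -> b <= n -> act_arcs n p q N a b = m a b.
Proof.
have N_sym := act_arcs_sym n p q m_sym.
have mixed i o : inside i -> o \in outer_order n p q -> act_arcs n p q N i o = m i o.
  move=> i_in o_oo; have o_out : ~~ inside o by move: o_oo; rewrite mem_outer_order // => /andP[].
  rewrite act_arcs_mixed // cross_in_reflE cross_outE.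
  rewrite (eq_in_blocks (s := inner_order p q) (f' := fun a => out_deg a)) => [|x]; last first.
    by rewrite mem_inner_order // => x_in; rewrite sum_act_arcs_outer ?inside_refl ?reflK.
  rewrite (eq_in_blocks (s := outer_order n p q) (f' := fun o => in_deg o)) => [|x x_oo].
    exact: count_zip_blocks_deg.
  exact: sum_act_arcs_inner.
move=> a_le b_le; case: (boolP (inside a)) => a_in; case: (boolP (inside b)) => b_in.
- by rewrite !act_arcs_inside ?inside_refl ?reflK.
- by apply: mixed; rewrite // mem_outer_order // b_le.
- by rewrite act_arcs_sym // mixed 1?m_sym // mem_outer_order // a_le.
- by rewrite !act_arcs_outside.
Qed.

End GcdInvariance.

Lemma pair_gcd_act_arcs n p q m : p <= q -> q <= n -> (forall a b, m a b = m b a) ->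
  noncrossing m -> pair_gcd n (act_arcs n p q m) = pair_gcd n m.
Proof.
move=> le_pq le_qn m_sym m_noncrossing; have N_sym := act_arcs_sym n p q m_sym.
apply/eqP; rewrite eqn_dvd pair_gcd_dvdn_act_arcs // andbT.
apply: dvdn_pair_gcd => a b lt_ab b_le; have a_le : a <= n by apply: ltnW (leq_trans lt_ab _).
rewrite -(act_arcsK le_pq le_qn m_sym m_noncrossing a_le b_le).
apply: dvdn_trans (pair_gcd_dvdn_act_arcs le_pq le_qn N_sym) _.
by apply: pair_gcd_dvdn; rewrite ?neq_ltn ?lt_ab //; apply: act_arcs_sym.
Qed.

Theorem mainTheorem5 (n : nat) (l : nat -> nat) (x : diagram)
    (w : seq (nat * nat)) :
  is_arc_diagram n l x -> all (valid_gen n) w ->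
  arc_gcd n (act_word n w x) = arc_gcd n x.
Proof.
case=> _ [x_sym _ _ x_noncrossing _] w_valid.
suff [_ _ ->] : [/\ forall a b, arcs (act_word n w x) a b = arcs (act_word n w x) b a,
  noncrossing (arcs (act_word n w x)) & arc_gcd n (act_word n w x) = arc_gcd n x] by [].
elim: w w_valid => [|[p q] w IH] //= /andP[/andP[/andP[_ /ltnW le_pq] le_qn]].
case/IH=> y_sym y_noncrossing gcd_y; split.
- exact: act_arcs_sym.
- exact: noncrossing_act_arcs.
- by rewrite -gcd_y; apply: pair_gcd_act_arcs.
Qed.
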